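(* Let $G$ be a finite group and $\mathcal{P}$ a prime ideal of $\mathrm{Gh}(\underline{A}_G)$ with $\mathcal{P}(G/e)=(p)\subseteq\mathbb{Z}$ for a prime $p$. For $I\le G$ let $p_I\ge0$ be the integer with $\mathcal{P}(G/G)=\widetilde{A}(G)\cap\prod_{I\le G}p_I\mathbb{Z}$, and set $\mathscr{F}(\mathcal{P})=\{I\le G: p_I\ne1\}$. Then $\mathcal{P}=\mathcal{P}_{\mathscr{F}(\mathcal{P}),p}$.
   Context: For $H\le G$, $\widetilde{A}(H)$ is the subring of $\prod_{I\le H}\mathbb{Z}$ of tuples $(a_I)_{I\le H}$ with $a_{hIh^{-1}}=a_I$ for $h\in H$ (so $\widetilde{A}(e)=\mathbb{Z}$). $\mathrm{Gh}(\underline{A}_G)$ is the $G$-Tambara functor with $\mathrm{Gh}(\underline{A}_G)(G/H)=\widetilde{A}(H)$ and, for $H\le K$, $g\in G$, $I^g=g^{-1}Ig$: $\mathrm{res}^K_H(b)_L=b_L$; $\mathrm{tr}^K_H(a)_I=\sum_{kH\in K/H,\ I^k\le H}a_{I^k}$; $\mathrm{nm}^K_H(a)_I=\prod_{IgH\in I\backslash K/H}a_{I^g\cap H}$; $c_{g,H}(a)_J=a_{J^g}$ for $J\le gHg^{-1}$. For a set $\mathscr{F}$ of subgroups closed under conjugation and $p$ a prime or $0$, $\mathcal{P}_{\mathscr{F},p}(G/H)=\widetilde{A}(H)\cap\prod_{I\le H}\delta(I)\mathbb{Z}$ where $\delta(I)=p$ if $I\in\mathscr{F}$ and $1$ otherwise.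 A Tambara ideal is a collection of ideals $\mathcal{I}(G/H)$ closed under all restrictions, transfers, norms and conjugations; it is prime (Nakaoka) if it is not everything and whenever $a\in T(G/K_1)$, $b\in T(G/K_2)$ satisfy $\big(\mathrm{nm}^L_{g_1H_1g_1^{-1}}c_{g_1,H_1}\mathrm{res}^{K_1}_{H_1}(a)\big)\big(\mathrm{nm}^L_{g_2H_2g_2^{-1}}c_{g_2,H_2}\mathrm{res}^{K_2}_{H_2}(b)\big)\in\mathcal{I}(G/L)$ for all $L,H_1,H_2\le G$, $g_1,g_2\in G$ with $H_i\le K_i$, $g_iH_ig_i^{-1}\le L$, then $a\in\mathcal{I}(G/K_1)$ or $b\in\mathcal{I}(G/K_2)$. *)

From mathcomp Require Import all_boot all_order all_algebra all_fingroup.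
Set Implicit Arguments. Unset Strict Implicit. Unset Printing Implicit Defensive.
Import GRing.Theory Num.Theory.
Local Open Scope ring_scope.

(* The ambient finite group G is the whole group [set: gT].
   An element of Gh(A_G)(G/H) is represented by a function
   a : {group gT} -> int, whose value at I is the coordinate a_I for I <= H,
   and which is 0 at groups not contained in H (canonical representative). *)
Section Ghost.
Variable gT : finGroupType.

Definition gfun := {group gT} -> int.

Definition Atil (H : {group gT}) (a : gfun) : Prop :=
  (forall I : {group gT}, ~~ (I \subset H) -> a I = 0) /\
  (forall I : {group gT}, I \subset H ->
     forall h : gT, h \in H -> a (I :^ h)%G = a I).

Definition gadd (a b : gfun) : gfun := fun I => a I + b I.
Definition gmul (a b : gfun) : gfun := fun I => a I * b I.
Definition gopp (a : gfun) : gfun := fun I => - a I.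
Definition gzero : gfun := fun _ => 0.

(* res^K_H (the source K is irrelevant for the formula). *)
Definition gres (H : {group gT}) (b : gfun) : gfun :=
  fun L => if L \subset H then b L else 0.

Definition gtr (K H : {group gT}) (a : gfun) : gfun :=
  fun I => if I \subset K then
      \sum_(C in lcosets H K | (I :^ repr C)%g \subset H) a (I :^ repr C)%G
    else 0.

Definition gnm (K H : {group gT}) (a : gfun) : gfun :=
  fun I => if I \subset K then
      \prod_(D in [set ((I :* g) * H)%g | g in K])
        a (I :^ repr D :&: H)%G
    else 0.

(* c_{g,H} : T(G/H) -> T(G/gHg^-1), c_{g,H}(a)_J = a_{J^g}; gHg^-1 = H :^ g^-1 *)
Definition gconj (g : gT) (H : {group gT}) (a : gfun) : gfun :=
  fun J => if J \subset (H :^ g^-1)%g then a (J :^ g)%G else 0.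

Definition is_ideal (H : {group gT}) (J : gfun -> Prop) : Prop :=
  [/\ (forall a, J a -> Atil H a),
      J gzero,
      (forall a b, J a -> J b -> J (gadd a b)),
      (forall a, J a -> J (gopp a)) &
      (forall r a, Atil H r -> J a -> J (gmul r a))].

Definition tambara_ideal (I : {group gT} -> gfun -> Prop) : Prop :=
  [/\ (forall H, is_ideal H (I H)),
      (forall H K : {group gT}, H \subset K ->
         forall b, I K b -> I H (gres H b)),
      (forall H K : {group gT}, H \subset K ->
         forall a, I H a -> I K (gtr K H a)),
      (forall H K : {group gT}, H \subset K ->
         forall a, I H a -> I K (gnm K H a)) &
      (forall (g : gT) (H : {group gT}) a, I H a ->
         I (H :^ g^-1)%G (gconj g H a))].

(* Prime Tambara ideal in the sense of Nakaoka. *)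
Definition prime_tambara_ideal (I : {group gT} -> gfun -> Prop) : Prop :=
  [/\ tambara_ideal I,
      (exists (H : {group gT}) a, Atil H a /\ ~ I H a) &
      (forall (K1 K2 : {group gT}) (a b : gfun), Atil K1 a -> Atil K2 b ->
        (forall (L H1 H2 : {group gT}) (g1 g2 : gT),
           H1 \subset K1 -> H2 \subset K2 ->
           (H1 :^ g1^-1)%g \subset L -> (H2 :^ g2^-1)%g \subset L ->
           I L (gmul (gnm L (H1 :^ g1^-1)%G (gconj g1 H1 (gres H1 a)))
                     (gnm L (H2 :^ g2^-1)%G (gconj g2 H2 (gres H2 b))))) ->
        I K1 a \/ I K2 b)].

Definition PFp (F : pred {group gT}) (p : nat) (H : {group gT}) (a : gfun)
  : Prop :=
  Atil H a /\ (forall I : {group gT}, I \subset H -> F I -> (p %| a I)%Z).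

End Ghost.

(* Everything is read off the top level P(G/G).  The norm from G/e of the constant p
   lies in P(G/G) and equals p^#|I\G| at I, so P(G/G) contains some constant p^(2^k);
   primality with a = b extracts square roots of constants, so P(G/G) contains p and
   every p_I is 1 or p.  Then P_{F,p}(G/H) is generated by the restriction of
   (p_I)_I.  Conversely, if x lies in P(G/H) with p_I = p but p does not divide x_I,
   Bezout with the constant p gives an element of P(G/H) whose I-coordinate is 1;
   norming it to N(I), cutting it down to the indicator of I and transferring to G
   yields an element of P(G/G) with I-coordinate 1, contradicting p_I | 1. *)

From mathcomp Require Import all_boot all_order all_algebra all_fingroup.
From Stdlib Require Import FunctionalExtensionality.
Set Implicit Arguments. Unset Strict Implicit. Unset Printing Implicit Defensive.
Import GRing.Theory Num.Theory.
Local Open Scope ring_scope.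

Section GhostFunctions.
Variable gT : finGroupType.
Implicit Types (H I J K : {group gT}) (b x y : gfun gT).

Definition gcst (c : int) : gfun gT := fun _ => c.

Definition gdelta I : gfun gT := fun J => if J == I then 1 else 0.

Definition double_cosets I K H : {set {set gT}} := [set (I :* g * H)%g | g in K].

Lemma Atil_cst_setT c : Atil [set: gT]%G (gcst c).
Proof. by split=> [I /negP[]|//]; apply: subsetT. Qed.

Lemma Atil_gres H K b : H \subset K -> Atil K b -> Atil H (gres H b).
Proof.
move=> sHK [b0 bJ]; split=> [I nI|I sIH h hH]; rewrite /gres ?(negbTE nI) //.
by rewrite sIH -(conjGid hH) conjSg sIH bJ ?(subset_trans sIH) ?(subsetP sHK).
Qed.

Lemma Atil_gres_cst H c : Atil H (gres H (gcst c)).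
Proof. exact: Atil_gres (subsetT H) (Atil_cst_setT c). Qed.

Lemma Atil_mul H x y : Atil H x -> Atil H y -> Atil H (gmul x y).
Proof.
move=> [x0 xJ] [y0 yJ]; split=> [I nI|I sIH h hH]; rewrite /gmul.
  by rewrite x0 // mul0r.
by rewrite xJ // yJ.
Qed.

Lemma is_ideal_dvd H (J : gfun gT -> Prop) x y :
  is_ideal H J -> J x -> Atil H y -> (forall K, (x K %| y K)%Z) -> J y.
Proof.
move=> [JA _ _ _ JM] Jx [y0 yJ] dvd_xy; have [x0 xJ] := JA _ Jx.
pose r : gfun gT := fun K => (y K %/ x K)%Z.
have -> : y = gmul r x by apply: functional_extensionality => K; rewrite /gmul divzK.
apply: JM => //; split=> [I nI|I sIH h hH]; rewrite /r; first by rewrite y0 // div0z.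
by rewrite xJ // yJ.
Qed.

Lemma gconj_gres_cst g H c :
  gconj g H (gres H (gcst c)) = gres (H :^ g^-1)%G (gcst c).
Proof.
apply: functional_extensionality => J; rewrite /gconj /gres /=.
by case: ifP => // sJ; rewrite sub_conjg sJ.
Qed.

Lemma double_cosets_gt0 I K H : (0 < #|double_cosets I K H|)%N.
Proof. by apply/card_gt0P; exists (I :* 1 * H)%g; apply: imset_f. Qed.

(* Left translation by [h^-1] maps the double cosets of [I] onto those of [I :^ h]. *)
Lemma card_double_cosetsJ I K H h :
  h \in K -> #|double_cosets (I :^ h) K H| = #|double_cosets I K H|.
Proof.
move=> hK; rewrite -(card_imset (double_cosets I K H) (@lcoset_inj _ h^-1%g)).
have shift g : ((I :^ h) :* g * H = h^-1 *: (I :* (h * g) * H))%g.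
  by rewrite conjsgE rcosetM !mulgA.
congr #|pred_of_set _|.
apply/setP => D; apply/imsetP/imsetP => [[g gK ->]|[_ /imsetP[g gK ->] ->]].
  by exists (I :* (h * g) * H)%g; rewrite ?shift //; apply: imset_f; rewrite groupM.
by exists (h^-1 * g)%g; rewrite ?shift ?mulKVg // groupM ?groupV.
Qed.

Lemma gnm_gres_cst K H c I :
  gnm K H (gres H (gcst c)) I =
  if I \subset K then c ^+ #|double_cosets I K H| else 0.
Proof.
rewrite /gnm; case: ifP => // _.
by rewrite (eq_bigr (fun=> c)) ?prodr_const // => D _; rewrite /gres subsetIr.
Qed.

Lemma Atil_gnm_gres_cst K H c : Atil K (gnm K H (gres H (gcst c))).
Proof.
split=> [I nI|I sIK h hK]; rewrite !gnm_gres_cst ?(negbTE nI) //.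
by rewrite sub_conjg conjGid ?groupV // sIK card_double_cosetsJ.
Qed.

Lemma gnm_normaliser I x :
  gnm 'N(I)%G I x I = x I ^+ #|double_cosets I 'N(I) I|.
Proof.
rewrite /gnm normG (eq_bigr (fun=> x I)) ?prodr_const // => _ /imsetP[g gN ->].
have rN : repr (I :* g * I)%g \in 'N(I)%g.
  have : repr (I :* g * I)%g \in (I :* g * I)%g.
    by apply: (mem_repr (g * 1)%g); rewrite mem_mulg ?rcoset_refl.
  case/mulsgP => _ i2 /rcosetP[i1 i1I ->] i2I ->.
  by rewrite !groupM // (subsetP (normG I)).
by congr (x _); apply/val_inj; rewrite /= (normP rN) setIid.
Qed.

Lemma Atil_gdelta_normaliser I : Atil 'N(I)%G (gdelta I).
Proof.
split=> [J nJ|J sJ h hN]; rewrite /gdelta.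
  by case: eqP => // eJ; rewrite eJ normG in nJ.
suff -> : ((J :^ h)%G == I) = (J == I) by [].
apply/eqP/eqP => [/(congr1 val) /= eJ|->]; apply/val_inj => /=; last exact/normP.
by rewrite -(conjsgK h J) eJ; apply/normP; rewrite groupV.
Qed.

(* Only the trivial coset of [N(I)] conjugates [I] into [I]. *)
Lemma gtr_gdelta_normaliser I : gtr [set: gT]%G 'N(I)%G (gdelta I) I = 1.
Proof.
rewrite /gtr subsetT (bigD1 (gval 'N(I)%G)) /=; last first.
  rewrite repr_group conjsg1 normG andbT; apply/lcosetsP.
  by exists 1%g; rewrite ?inE // lcoset1.
rewrite big1 ?addr0 => [|C /andP[/andP[/lcosetsP[y _ Cy] _] nC]].
  have -> : (I :^ repr 'N(I))%G = I by apply/val_inj; rewrite /= repr_group conjsg1.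
  by rewrite /gdelta eqxx.
rewrite /gdelta; case: eqP => [/(congr1 val) /= eC|] //.
have rN : repr C \in 'N(I)%g by apply/normP.
have : repr C \in (y *: 'N(I))%g by rewrite -Cy; apply: (mem_repr y); rewrite Cy lcoset_refl.
rewrite mem_lcoset groupMr // groupV => yN.
by move: nC; rewrite Cy lcoset_id ?eqxx.
Qed.

End GhostFunctions.

Section TambaraIdeal.
Variables (gT : finGroupType) (P : {group gT} -> gfun gT -> Prop).
Hypothesis P_tambara : tambara_ideal P.
Implicit Types (H I : {group gT}) (a x : gfun gT).

Lemma tambara_coord1_setT H x I :
  P H x -> I \subset H -> x I = 1 -> exists2 y, P [set: gT]%G y & y I = 1.
Proof.
case: P_tambara => P_ideal P_res P_tr P_nm _ Px sIH xI.
have Pw := P_nm _ _ (normG I) _ (P_res _ _ sIH _ Px).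
have wI : gnm 'N(I)%G I (gres I x) I = 1.
  by rewrite gnm_normaliser /gres subxx xI expr1n.
have Pd : P 'N(I)%G (gdelta I).
  have [_ _ _ _ P_mul] := P_ideal 'N(I)%G.
  have -> : gdelta I = gmul (gdelta I) (gnm 'N(I)%G I (gres I x)).
    apply: functional_extensionality => J; rewrite /gmul /gdelta.
    by case: eqP => [->|_]; rewrite ?wI ?mulr1 ?mul0r.
  exact: P_mul (Atil_gdelta_normaliser I) Pw.
exists (gtr [set: gT]%G 'N(I)%G (gdelta I)); last exact: gtr_gdelta_normaliser.
exact: P_tr (subsetT _) _ Pd.
Qed.

Lemma tambara_coprime_coord1 (c : int) H a I :
  P [set: gT]%G (gcst c) -> P H a -> I \subset H -> coprimez c (a I) ->
  exists2 x, P H x & x I = 1.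
Proof.
case: P_tambara => P_ideal P_res _ _ _ Pc Pa sIH /coprimezP[[s t] /= st1].
have [_ _ P_add _ P_mul] := P_ideal H.
exists (gadd (gmul (gres H (gcst s)) (gres H (gcst c)))
             (gmul (gres H (gcst t)) a)).
  apply: P_add; apply: P_mul (Atil_gres_cst _ _) _ => //.
  exact: P_res (subsetT H) _ Pc.
by rewrite /gadd /gmul /gres sIH.
Qed.

End TambaraIdeal.

Section PrimeTambaraIdeal.
Variables (gT : finGroupType) (P : {group gT} -> gfun gT -> Prop).
Hypothesis P_prime : prime_tambara_ideal P.

(* Primality applied to [a = b = c]: every product of norms of [c] is a multiple of
   [c * c], hence lies in the ideal generated by [c * c]. *)
Lemma prime_tambara_cst_sqr (c : int) :
  P [set: gT]%G (gcst (c * c)) -> P [set: gT]%G (gcst c).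
Proof.
case: P_prime => [[P_ideal P_res _ _ _] _ P_primality] Pcc.
suff [] : P [set: gT]%G (gcst c) \/ P [set: gT]%G (gcst c) by [].
apply: P_primality (Atil_cst_setT _ c) (Atil_cst_setT _ c) _.
move=> L H1 H2 g1 g2 _ _ _ _; rewrite !gconj_gres_cst.
apply: (is_ideal_dvd (P_ideal L) (P_res _ _ (subsetT L) _ Pcc)).
  exact: Atil_mul (Atil_gnm_gres_cst _ _ _) (Atil_gnm_gres_cst _ _ _).
move=> J; rewrite /gres /gmul !gnm_gres_cst; case: ifP => _; last by rewrite mul0r.
by rewrite dvdz_mul // dvdz_exp ?double_cosets_gt0.
Qed.

Lemma prime_tambara_cst_pow2 (c : int) (k : nat) :
  P [set: gT]%G (gcst (c ^+ (2 ^ k)%N)) -> P [set: gT]%G (gcst c).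
Proof.
elim: k => [|k IHk] Pck; first by rewrite expn0 expr1 in Pck.
by apply/IHk/prime_tambara_cst_sqr; rewrite -exprD addnn -mul2n -expnS.
Qed.

End PrimeTambaraIdeal.

Section Corollary.
Variables (gT : finGroupType) (P : {group gT} -> gfun gT -> Prop).
Variables (p : nat) (pI : {group gT} -> nat).
Hypotheses (P_prime : prime_tambara_ideal P) (p_prime : prime p).
Hypothesis P_bot : forall a, P 1%G a <-> Atil 1%G a /\ (p %| a 1%G)%Z.
Hypothesis P_top : forall a, P [set: gT]%G a <->
  Atil [set: gT]%G a /\ (forall I : {group gT}, (pI I %| a I)%Z).
Hypothesis pIJ : forall (I : {group gT}) (g : gT), pI (I :^ g)%G = pI I.
Implicit Types (H I : {group gT}) (a : gfun gT).

Lemma P_top_cst (c : int) : P [set: gT]%G (gcst c) <-> forall I, (pI I %| c)%Z.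
Proof.
split=> [/P_top[] //|dvd_c]; apply/P_top; split=> //; exact: Atil_cst_setT.
Qed.

Lemma pI_dvd_exp_card I : (pI I %| p%:Z ^+ #|gT|)%Z.
Proof.
case: P_prime => [[_ _ _ P_nm _] _ _].
have Pp1 : P 1%G (gres 1%G (gcst p)).
  by apply/P_bot; split; [apply: Atil_gres_cst | rewrite /gres subxx].
have /P_top[_ /(_ I)] := P_nm _ _ (sub1G [set: gT]%G) _ Pp1.
rewrite gnm_gres_cst subsetT => /dvdz_trans; apply; apply: dvdz_exp2l.
by rewrite -cardsT; apply: leq_imset_card.
Qed.

Lemma pI_dvd_p I : (pI I %| p)%N.
Proof.
suff /P_top_cst : P [set: gT]%G (gcst p) by apply.
apply: (prime_tambara_cst_pow2 (c := p) (k := #|gT|) P_prime); apply/P_top_cst => J.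
apply: dvdz_trans (pI_dvd_exp_card J) _; apply: dvdz_exp2l.
exact/ltnW/ltn_expl.
Qed.

Lemma pI_eq_p I : pI I != 1%N -> pI I = p.
Proof.
by case/primeP: p_prime => _ /(_ _ (pI_dvd_p I)) /pred2P[] // ->.
Qed.

Lemma PFp_sub_P H a : PFp (fun I => pI I != 1%N) p H a -> P H a.
Proof.
case: P_prime => [[P_ideal P_res _ _ _] _ _] [Aa Fa].
have PpI : P [set: gT]%G (fun J => (pI J)%:Z).
  apply/P_top; split=> [|I]; last exact: dvdzz.
  by split=> [I /negP[]|I _ h _]; [apply: subsetT | rewrite pIJ].
apply: (is_ideal_dvd (P_ideal H) (P_res _ _ (subsetT H) _ PpI)) => // J.
rewrite /gres; case: ifP => sJ; last by rewrite Aa.1 ?sJ.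
case: (boolP (pI J != 1%N)) => [nJ|/negbNE/eqP ->]; last exact: dvd1z.
by rewrite (pI_eq_p nJ); apply: Fa.
Qed.

Lemma P_sub_PFp H a : P H a -> PFp (fun I => pI I != 1%N) p H a.
Proof.
case: P_prime => [P_tambara _ _] Pa; have [P_ideal _ _ _ _] := P_tambara.
split=> [|I sIH nI]; first by have [P_Atil _ _ _ _] := P_ideal H; apply: P_Atil.
apply/negPn/negP => ndvd.
have Pp : P [set: gT]%G (gcst p) by apply/P_top_cst => J; apply: pI_dvd_p.
have [x Px xI] : exists2 x, P H x & x I = 1.
  by apply: (tambara_coprime_coord1 P_tambara Pp Pa sIH); rewrite coprimezE prime_coprime.
have [y /P_top[_ /(_ I) pI_dvd_y] yI] := tambara_coord1_setT P_tambara Px sIH xI.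
by move: pI_dvd_y; rewrite yI; apply/negP; rewrite -dvdn1 in nI.
Qed.

End Corollary.

Theorem corollary4p11 (gT : finGroupType) (P : {group gT} -> gfun gT -> Prop)
  (p : nat) (pI : {group gT} -> nat) :
  prime_tambara_ideal P ->
  prime p ->
  (forall a, P 1%G a <-> Atil 1%G a /\ (p %| a 1%G)%Z) ->
  (forall a, P [set: gT]%G a <->
     Atil [set: gT]%G a /\ (forall I : {group gT}, (pI I %| a I)%Z)) ->
  (forall (I : {group gT}) (g : gT), pI (I :^ g)%G = pI I) ->
  forall (H : {group gT}) (a : gfun gT),
    P H a <-> PFp (fun I : {group gT} => pI I != 1%N) p H a.
Proof.
move=> P_prime p_prime P_bot P_top pIJ H a.
by split; [apply: P_sub_PFp | apply: PFp_sub_P].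
Qed.
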